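(* Let $X$ be an affine variety and $\mathcal E\subseteq\operatorname{End}(X)$ a closed semi-subgroup. If $Y\subset X$ is a closed $\mathcal E$-stable subvariety, then $Y$ is $\mathcal D_{\mathcal E}$-invariant.
   Context: $\Bbbk$ is algebraically closed of characteristic $0$. Vector fields on $X$ are derivations of $\mathcal O(X)$, with values $\xi(x)\in T_xX$. $\operatorname{End}(X)$, the semigroup of morphisms $X\to X$, is an affine ind-variety (increasing union of closed affine subvarieties) and an ind-semigroup under composition. For a closed semi-subgroup $\mathcal E$ (containing $\mathrm{id}_X$), $T_{\mathrm{id}}\mathcal E$ is its Zariski tangent space at $\mathrm{id}$; for $x\in X$ let $\mu_x\colon\mathcal E\to X$, $\phi\mapsto\phi(x)$, and for $A\in T_{\mathrm{id}}\mathcal E$ let $\xi_A(x)=(d\mu_x)_{\mathrm{id}}(A)$; $\mathcal D_{\mathcal E}=\{\xi_A\mid A\in T_{\mathrm{id}}\mathcal E\}$. $Y$ is $\mathcal E$-stable if $\phi(Y)\subset Y$ for all $\phi\in\mathcal E$, and $\mathcal D_{\mathcal E}$-invariant if $\xi(y)\in T_yY$ for all $y\in Y$, $\xi\in\mathcal D_{\mathcal E}$. *)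

From HB Require Import structures.
From mathcomp Require Import all_boot all_order all_algebra.
From mathcomp Require Import mpoly.
Set Implicit Arguments. Unset Strict Implicit. Unset Printing Implicit Defensive.
Import GRing.Theory.
Local Open Scope ring_scope.

Definition point (k : fieldType) (n : nat) := 'I_n -> k.

Definition vanishes_on (k : fieldType) (n : nat) (Z : point k n -> Prop)
  (f : {mpoly k[n]}) : Prop :=
  forall z, Z z -> meval z f = 0.

Definition zclosed (k : fieldType) (n : nat) (Z : point k n -> Prop) : Prop :=
  forall x : point k n, (forall f, vanishes_on Z f -> meval x f = 0) -> Z x.

Definition tangent_space (k : fieldType) (n : nat) (Z : point k n -> Prop)
  (z : point k n) (v : point k n) : Prop :=
  forall f, vanishes_on Z f -> \sum_(i < n) meval z (mderiv i f) * v i = 0.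

Definition differential (k : fieldType) (N n : nat) (P : 'I_n -> {mpoly k[N]})
  (p v : point k N) : point k n :=
  fun i => \sum_(j < N) meval p (mderiv j (P i)) * v j.

Definition polymap (k : fieldType) (n : nat) := 'I_n -> {mpoly k[n]}.

Definition apply_map (k : fieldType) (n : nat) (F : polymap k n) (x : point k n)
  : point k n := fun i => meval x (F i).

Definition id_map (k : fieldType) (n : nat) : polymap k n :=
  fun i => @mpolyX n k (mnm1 i).

Definition comp_map (k : fieldType) (n : nat) (F G : polymap k n) : polymap k n :=
  fun i => comp_mpoly [tuple G j | j < n] (F i).

Definition maps_into (k : fieldType) (n : nat) (X : point k n -> Prop)
  (F : polymap k n) : Prop :=
  forall x, X x -> X (apply_map F x).

Definition same_on (k : fieldType) (n : nat) (X : point k n -> Prop)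
  (F G : polymap k n) : Prop :=
  forall x, X x -> apply_map F x = apply_map G x.

(* The d-th filtration piece: polynomial maps of total degree <= d, with
   coordinates the coefficients c(i,m), i < n, m a monomial of degree <= d. *)
Definition cdim (n d : nat) : nat := #|{: ('I_n * 'X_{1..n < d.+1})%type}|.

Definition coef_map (k : fieldType) (n d : nat) (c : point k (cdim n d))
  : polymap k n :=
  fun i => \sum_(m : 'X_{1..n < d.+1})
             c (enum_rank (i, m)) *: @mpolyX n k (bmnm m).

(* For x in k^n, the evaluation map mu_x : phi |-> phi(x), restricted to the
   d-th filtration piece, as a polynomial map k^(cdim n d) -> k^n. *)
Definition mu_poly (k : fieldType) (n d : nat) (x : point k n)
  : 'I_n -> {mpoly k[cdim n d]} :=
  fun i => \sum_(m : 'X_{1..n < d.+1})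
             meval x (@mpolyX n k (bmnm m)) *: @mpolyX (cdim n d) k (mnm1 (enum_rank (i, m))).

(* A closed semi-subgroup E of End(X) (given by the set of all polynomial
   tuples representing its elements). *)
Definition closed_semisubgroup (k : fieldType) (n : nat)
  (X : point k n -> Prop) (E : polymap k n -> Prop) : Prop :=
  [/\ (forall F, E F -> maps_into X F),
      (forall F G, E F -> same_on X F G -> E G),
      E (@id_map k n),
      (forall F G, E F -> E G -> E (comp_map F G)) &
      (forall d, zclosed (fun c : point k (cdim n d) => E (coef_map c)))].

Definition E_piece (k : fieldType) (n : nat) (E : polymap k n -> Prop) (d : nat)
  : point k (cdim n d) -> Prop := fun c => E (coef_map c).

(* The vector field xi_A for A in T_id E: A is a tangent vector at (a
   representative c0 of) id to some E_d, and xi_A(x) = (d mu_x)_id (A). *)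
Definition in_D_E (k : fieldType) (n : nat) (E : polymap k n -> Prop)
  (xi : point k n -> point k n) : Prop :=
  exists d (c0 A : point k (cdim n d)),
    [/\ (forall i, coef_map c0 i = @id_map k n i),
        tangent_space (@E_piece k n E d) c0 A &
        forall x, xi x = differential (@mu_poly k n d x) c0 A].

Definition E_stable (k : fieldType) (n : nat) (E : polymap k n -> Prop)
  (Y : point k n -> Prop) : Prop :=
  forall F, E F -> forall y, Y y -> Y (apply_map F y).

Definition D_E_invariant (k : fieldType) (n : nat) (E : polymap k n -> Prop)
  (Y : point k n -> Prop) : Prop :=
  forall xi, in_D_E E xi -> forall y, Y y -> tangent_space Y y (xi y).

(* For fixed y, the orbit map mu_y : phi |-> phi(y) sends each filtration
   piece E_d of E into Y, because Y is E-stable, and sends the identity to y.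
   By the chain rule, the differential of a polynomial map sending Z into W
   carries Zariski tangent vectors of Z to Zariski tangent vectors of W; hence
   xi_A(y) = (d mu_y)_id(A) lies in T_y Y. *)
From Pilot Require Import Defs.
From Stdlib Require Import FunctionalExtensionality.
From HB Require Import structures.
From mathcomp Require Import all_boot all_order all_algebra.
From mathcomp Require Import ring.
From mathcomp Require Import mpoly.
Set Implicit Arguments. Unset Strict Implicit. Unset Printing Implicit Defensive.
Import GRing.Theory.
Local Open Scope ring_scope.

Lemma mderivXU (R : comNzRingType) (n : nat) (i l : 'I_n) :
  mderiv i ('X_l : {mpoly R[n]}) = (l == i)%:R.
Proof.
rewrite mderivX mnm1E; case: eqP => [->|_]; last by rewrite scale0r.
have -> : (U_(i) - U_(i) = 0)%MM by apply/mnmP=> j; rewrite !mnmE subnn.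
by rewrite mpolyX0 scale1r.
Qed.

Section ChainRule.
Variables (R : comNzRingType) (N n : nat) (lq : n.-tuple {mpoly R[N]}).

Lemma mderiv_comp_mpoly (f : {mpoly R[n]}) (j : 'I_N) :
  mderiv j (f \mPo lq) =
  \sum_(i < n) (mderiv i f \mPo lq) * mderiv j (tnth lq i).
Proof.
pose S (f : {mpoly R[n]}) := mderiv j (f \mPo lq) =
  \sum_(i < n) (mderiv i f \mPo lq) * mderiv j (tnth lq i).
have S_add p q : S p -> S q -> S (p + q).
  rewrite /S => Sp Sq; rewrite comp_mpolyD mderivD Sp Sq -big_split /=.
  by apply: eq_bigr => i _; rewrite mderivD comp_mpolyD mulrDl.
have S_scale c p : S p -> S (c *: p).
  rewrite /S => Sp; rewrite comp_mpolyZ mderivZ Sp scaler_sumr.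
  by apply: eq_bigr => i _; rewrite mderivZ comp_mpolyZ scalerAl.
have S_mul p q : S p -> S q -> S (p * q).
  rewrite /S => Sp Sq; rewrite rmorphM /= mderivM Sp Sq.
  rewrite mulr_suml mulr_sumr -big_split /=.
  apply: eq_bigr => i _; rewrite mderivM comp_mpolyD !rmorphM /=.
  by ring.
have S_one : S 1.
  rewrite /S comp_mpoly1 -mpolyC1 mderivC big1 // => i _.
  by rewrite mderivC comp_mpolyC mpolyC0 mul0r.
have S_var l : S 'X_l.
  rewrite /S comp_mpolyXU -tnth_nth (bigD1 l) //= big1 ?addr0.
    by rewrite mderivXU eqxx comp_mpoly1 mul1r.
  by move=> i /negbTE; rewrite mderivXU eq_sym => ->; rewrite comp_mpoly0 mul0r.
have S_monomial m : S 'X_[m].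
  rewrite mpolyXE_id; apply: (big_ind S) => // i _.
  elim: (m i) => [|e IHe]; first by rewrite expr0.
  by rewrite exprS; apply: S_mul.
elim/mpolyind: f => [|c m p _ _ Sp]; last by apply: S_add => //; apply: S_scale.
by rewrite /S comp_mpoly0 mderiv0 big1 // => i _; rewrite mderiv0 comp_mpoly0 mul0r.
Qed.

End ChainRule.

Section TangentFunctoriality.
Variables (k : fieldType) (N n : nat) (P : 'I_n -> {mpoly k[N]}).

Definition eval_map (p : point k N) : point k n := fun i => meval p (P i).

Let lq := [tuple P i | i < n].

Lemma meval_comp_map (p : point k N) (f : {mpoly k[n]}) :
  meval p (f \mPo lq) = meval (eval_map p) f.
Proof. by rewrite comp_mpoly_meval; apply: meval_eq => i; rewrite tnth_mktuple. Qed.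

Lemma differential_comp_map (p v : point k N) (f : {mpoly k[n]}) :
  \sum_(j < N) meval p (mderiv j (f \mPo lq)) * v j =
  \sum_(i < n) meval (eval_map p) (mderiv i f) * differential P p v i.
Proof.
under eq_bigr => j _ do rewrite mderiv_comp_mpoly raddf_sum /= mulr_suml.
rewrite exchange_big /=; apply: eq_bigr => i _; rewrite mulr_sumr.
apply: eq_bigr => j _.
by rewrite mevalM meval_comp_map tnth_mktuple mulrA.
Qed.

Lemma tangent_space_differential (Z : point k N -> Prop) (W : point k n -> Prop)
    (p v : point k N) :
  (forall z, Z z -> W (eval_map z)) ->
  tangent_space Z p v -> tangent_space W (eval_map p) (differential P p v).
Proof.
move=> ZW Tv f f_vanishes; rewrite -differential_comp_map; apply: Tv => z Zz.
by rewrite meval_comp_map; apply/f_vanishes/ZW.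
Qed.

End TangentFunctoriality.

Lemma eval_mu_poly (k : fieldType) (n d : nat) (y : point k n)
    (c : point k (cdim n d)) :
  eval_map (mu_poly d y) c = apply_map (Defs.coef_map c) y.
Proof.
apply: functional_extensionality => i.
rewrite /eval_map /mu_poly /apply_map /Defs.coef_map !raddf_sum /=.
by apply: eq_bigr => m _; rewrite !mevalZ mevalXU mulrC.
Qed.

Local Close Scope ring_scope.

Theorem proposition3p1p2 (k : closedFieldType) (char0 : [pchar k]%R =i pred0)
  (n : nat) (X : point k n -> Prop) (E : polymap k n -> Prop)
  (Y : point k n -> Prop) :
  zclosed X -> closed_semisubgroup X E ->
  zclosed Y -> (forall y, Y y -> X y) -> E_stable E Y ->
  D_E_invariant E Y.
Proof.
move=> _ _ _ _ Y_stable xi [d [c0 [A [c0_id TA xi_mu]]]] y Yy; rewrite xi_mu.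
have mu_id : eval_map (mu_poly d y) c0 = y.
  rewrite eval_mu_poly; apply: functional_extensionality => i.
  by rewrite /apply_map c0_id /id_map mevalXU.
rewrite -[X in tangent_space Y X]mu_id.
apply: tangent_space_differential TA => c Ec.
by rewrite eval_mu_poly; apply: Y_stable.
Qed.
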